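(* For an edge $t \overset{k}{—} t'$ in $\mathbb{T}_n$ and $\varepsilon\in \{\pm 1\}$, we have \[ \mu_{k;t}=\psi_{k;t}(\mathbf{\hat{Y}}_{k;t}^{\varepsilon})^{\varepsilon}\circ\phi_{k;t;\varepsilon}, \] where $\phi_{k;t;\varepsilon}$ is the unique $\mathbb{Z}[q^{\pm\frac{1}{2}}]$-algebra isomorphism from $\mathcal{F}_{t'}$ to $\mathcal{F}_{t}$ taking $\mathbf{X}_{t'}(\alpha)$ to $\mathbf{X}_{t}(E_{k,\varepsilon}^{\tilde{B}_{t}R}\alpha)$ for any $\alpha\in\mathbb{Z}^{m}$.
   Context: Setting: generalized quantum cluster algebras. Fix integers $m\ge n\ge 1$ and mutation data $(R,\mathbf{h})$: $R=\operatorname{diag}\{r_1,\dots,r_n\}$ with positive integers $r_k$, and for each $k\in[1,n]$ elements $h_{k,0}(q^{\frac12}),\dots,h_{k,r_k}(q^{\frac12})\in\mathbb{Z}[q^{\pm\frac12}]$ with $h_{k,s}=h_{k,r_k-s}$ and $h_{k,0}=h_{k,r_k}=1$. A compatible pair $(\tilde B,\Lambda)$ consists of an integer $m\times n$ matrix $\tilde B=(b_{ij})$ and a skew-symmetric integer $m\times m$ matrix $\Lambda=(\lambda_{ij})$ with $\tilde B^T\Lambda=[D\ 0]$, where $D=\operatorname{diag}\{d_1^{-1},\dots,d_n^{-1}\}$ has positive integer diagonal entries. $E_{k,\varepsilon}^{\tilde BR}$ is the $m\times m$ matrix equal to the identity except in its $k$-th column, whose entries are $-1$ in row $k$ and $[-\varepsilon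 b_{ik}r_k]_+$ in row $i\neq k$ (here $[b]_+=\max(b,0)$, applied entrywise to vectors). An $(R,\mathbf h)$-quantum seed pattern $t\mapsto\Sigma_t=(\mathbf X_t,\tilde B_t,\Lambda_t)$ over the $n$-regular tree $\mathbb{T}_n$ is fixed; for $\alpha=(a_1,\dots,a_m)^T\in\mathbb{Z}^m$, $\mathbf X_t(\alpha)=q^{\frac12\sum_{i<j}a_ia_j\lambda_{ji;t}}X_{1;t}^{a_1}\cdots X_{m;t}^{a_m}$, so $\mathbf X_t(\alpha)\mathbf X_t(\beta)=q^{\frac12\alpha^T\Lambda_t\beta}\mathbf X_t(\alpha+\beta)$. $\mathcal{T}_t$ is the quantum torus ($\mathbb{Z}[q^{\pm\frac12}]$-algebra spanned by the $\mathbf X_t(\alpha)$) and $\mathcal F_t$ its skew field of fractions. For $\alpha\in\mathbb{Z}^n$, $\hat{\mathbf Y}_t^\alpha:=\mathbf X_t(\tilde B_t\alpha)$ and $\hat{\mathbf Y}_{k;t}:=\hat{\mathbf Y}_t^{f_k}$ ($f_1,\dots,f_n$ standard basis of $\mathbb{Z}^n$; $e_1,\dots,e_m$ standard basis of $\mathbb{Z}^m$). For an edge $t\overset{k}{—}t'$, $\mu_{k;t}:\mathcal F_{t'}\to\mathcal F_t$ is the $\mathbb{Z}[q^{\pm\frac12}]$-algebra isomorphism with $\mu_{k;t}(\mathbf X_{t'}(e_i))=\mathbf X_t(e_i)$ for $i\ne k$ and $\mu_{k;t}(\mathbf X_{t'}(e_k))=\sum_{s=0}^{r_k}h_{k,s}(q^{\frac12})\mathbf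 X_t(s[\varepsilon\mathbf b_k]_++(r_k-s)[-\varepsilon\mathbf b_k]_+-e_k)$, $\mathbf b_k$ the $k$-th column of $\tilde B_t$ (independent of $\varepsilon$). For $a\in\mathbb{Z}$: $(\sum_{s=0}^{r_k}h_{k,s}(q^{\frac12})(q^{\frac b2}z)^s)^{\{a\}}$ is $\prod_{i=1}^a\sum_s h_{k,s}(q^{\frac12})(q^{\frac{b(2i-1)}2}z)^s$ if $a>0$, $1$ if $a=0$, and $\prod_{i=a}^{-1}(\sum_s h_{k,s}(q^{\frac12})(q^{\frac{b(2i+1)}2}z)^s)^{-1}$ if $a<0$; the exponent $-\{a\}$ denotes the inverse of this. With $(\mathbf u,\mathbf v)_D=\mathbf u^TD\mathbf v$ and $\bar\beta\in\mathbb{Z}^n$ the truncation of $\beta\in\mathbb{Z}^m$ to its first $n$ coordinates, $\psi_{k;t}(\hat{\mathbf Y}_t^\alpha):\mathcal F_t\to\mathcal F_t$ is the $\mathbb{Z}[q^{\pm\frac12}]$-algebra automorphism $\mathbf X_t(\beta)\mapsto\mathbf X_t(\beta)(\sum_{s=0}^{r_k}h_{k,s}(q^{\frac12})(q^{\frac1{2d_k}}\hat{\mathbf Y}_t^\alpha)^s)^{-\{d_k(\bar\beta,\alpha)_D\}}$; $\psi^{\varepsilon}$ means $\psi$ for $\varepsilon=1$ and its inverse for $\varepsilon=-1$. *)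

From HB Require Import structures.
From mathcomp Require Import all_boot all_order all_algebra.
Set Implicit Arguments. Unset Strict Implicit. Unset Printing Implicit Defensive.
Import Order.TTheory GRing.Theory Num.Theory.
Local Open Scope ring_scope.

(* Convention: m = n + p (so m >= n); vectors in Z^m are column vectors
   'cV[int]_(n+p); the truncation bar(beta) is usubmx beta.
   v stands for q^{1/2}. *)

(* (c, e) represents  sum_i c_i v^(e+i). *)
Definition laurent := (seq int * int)%type.

Definition lcoef (h : laurent) (j : int) : int :=
  if h.2 <= j then nth 0 h.1 `|j - h.2|%N else 0.

Definition leqv (h1 h2 : laurent) : Prop := forall j, lcoef h1 j = lcoef h2 j.

Definition lone : laurent := ([:: 1], 0).

Definition leval (F : unitRingType) (v : F) (h : laurent) : F :=
  \sum_(i < size h.1) (h.1`_i)%:~R * v ^ (h.2 + i%:Z).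

Definition posp (x : int) : int := Num.max x 0.
Definition posv (m : nat) (a : 'cV[int]_m) : 'cV[int]_m := map_mx posp a.

(* ---------- the skew field of fractions F_t of the quantum torus T_t ----------
   F is a division ring which is a Z[v^{+-1}]-algebra (v central unit),
   X alpha = X_t(alpha) satisfies X(a)X(b) = q^{a^T Lam b /2} X(a+b),
   the elements v^j X(alpha) are Z-linearly independent (so their span is the
   quantum torus T_t, a free Z[q^{+-1/2}]-module on the X(alpha)), and F is
   generated as a division ring by v and T_t (hence F is the skew field of
   fractions of the Ore domain T_t). *)
Definition skew_field_of_fractions (m : nat) (F : unitRingType) (v : F)
    (Lam : 'M[int]_m) (X : 'cV[int]_m -> F) : Prop :=
  [/\ (forall x : F, x != 0 -> x \is a GRing.unit),
      v \is a GRing.unit /\ (forall x : F, v * x = x * v),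
      (forall a b : 'cV[int]_m, X a * X b = v ^ ((a^T *m Lam *m b) 0 0) * X (a + b)),
      (forall (N : nat) (j : 'I_N -> int) (a : 'I_N -> 'cV[int]_m) (z : 'I_N -> int),
          injective (fun i => (j i, a i)) ->
          \sum_(i < N) (z i)%:~R * v ^ (j i) * X (a i) = 0 ->
          forall i, z i = 0) &
      (forall S : F -> Prop,
          S 1 -> (forall x y, S x -> S y -> S (x - y)) ->
          (forall x y, S x -> S y -> S (x * y)) ->
          (forall x, S x -> S x^-1) -> S v -> (forall a, S (X a)) ->
          forall x, S x)].

Definition Emx (n p : nat) (B : 'M[int]_(n + p, n)) (r : 'I_n -> nat)
    (k : 'I_n) (eps : int) : 'M[int]_(n + p) :=
  \matrix_(i, j) if j == lshift p k then
                   (if i == lshift p k then -1 else posp (- eps * B i k * (r k)%:Z))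
                 else (i == j)%:R.

Definition evec (m : nat) (i : 'I_m) : 'cV[int]_m := delta_mx i 0.

Definition hfac (F : unitRingType) (v : F) (h : nat -> F) (r : nat) (c : int) (z : F) : F :=
  \sum_(s < r.+1) h s * (v ^ c * z) ^+ s.

(* (sum_s h_s (q^{b/2} z)^s)^{a} *)
Definition hpow (F : unitRingType) (v : F) (h : nat -> F) (r : nat) (b : int) (z : F)
    (a : int) : F :=
  if 0 <= a then \prod_(j < `|a|%N) hfac v h r (b * (2 * j%:Z + 1)) z
  else \prod_(j < `|a|%N) (hfac v h r (b * (2 * (a + j%:Z) + 1)) z)^-1.

(* d_k (bar beta, alpha)_D, with D = diag(delta), delta_k = d_k^{-1} *)
Definition psi_exp (n p : nat) (delta : 'I_n -> int) (k : 'I_n)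
    (beta : 'cV[int]_(n + p)) (alpha : 'cV[int]_n) : int :=
  divz (((usubmx beta)^T *m diag_mx (\row_i delta i) *m alpha) 0 0) (delta k).

From HB Require Import structures.
From mathcomp Require Import all_boot all_order all_algebra.
From mathcomp Require Import zify ring.
Set Implicit Arguments. Unset Strict Implicit. Unset Printing Implicit Defensive.
Import Order.TTheory GRing.Theory Num.Theory.
Local Open Scope ring_scope.

(* Both sides are ring morphisms out of F_t', which is generated as a division
   ring by q^(1/2) and the X_t'(e_i), so it suffices to compare them on these
   generators; for i <> k all maps involved fix X(e_i).  For i = k put
   beta = E e_k and b = b_k.  Compatibility makes Lam b a multiple of e_k, so
   B_kk = 0 and X(beta) quasi-commutes with Y = X(eps b); since beta_k = -1 this
   gives X(beta) (q^(-eps delta_k/2) Y)^s = X(beta + s eps b), and the exchange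
   relation becomes mu(X_t'(e_k)) = X(beta) P with
   P = sum_s h_s (q^(-eps delta_k/2) Y)^s.
   On the other hand psi multiplies X(beta') by P^eps whenever beta'_k = -1.
   For eps = 1 this is psi(X(beta)); for eps = -1 it gives
   psi(mu(X_t'(e_k))) = X(beta) P P^-1 = X(beta). *)

Section SkewFieldOfFractions.
Variables (m : nat) (F : unitRingType) (v : F) (Lam : 'M[int]_m) (X : 'cV[int]_m -> F).
Hypothesis sfF : skew_field_of_fractions v Lam X.

Lemma sf_unit (x : F) : x != 0 -> x \is a GRing.unit.
Proof. by case: sfF => + _ _ _ _; apply. Qed.

Lemma sf_v_unit : v \is a GRing.unit.
Proof. by case: sfF => _ []. Qed.

Lemma sf_comm_vz (z : int) (x : F) : GRing.comm (v ^ z) x.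
Proof.
case: sfF => _ [_ vC] _ _ _.
by apply/commr_sym/commrXz; rewrite /GRing.comm vC.
Qed.

Lemma sf_XM a b : X a * X b = v ^ ((a^T *m Lam *m b) 0 0) * X (a + b).
Proof. by case: sfF => _ _ + _ _; apply. Qed.

Lemma sf_X0 : X 0 = 1.
Proof.
have X0_neq0 : X 0 != 0.
  apply/eqP => X00; case: sfF => _ _ _ /(_ 1%N (fun _ => 0) (fun _ => 0) (fun _ => 1)) indep _.
  have inj : injective (fun _ : 'I_1 => (0 : int, 0 : 'cV[int]_m)) by move=> i j _; rewrite !ord1.
  by move: indep => /(_ inj); rewrite big_ord1 X00 mulr0 => /(_ erefl ord0).
apply: (mulIr (sf_unit X0_neq0)).
by rewrite mul1r sf_XM mulmx0 mxE expr0z mul1r addr0.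
Qed.

Lemma sf_X_unit a : X a \is a GRing.unit.
Proof.
apply: sf_unit; apply/eqP => Xa0.
have := unitrXz ((a^T *m Lam *m - a) 0 0) sf_v_unit.
by rewrite -[X in X \is a _]mulr1 -sf_X0 -(subrr a) -sf_XM Xa0 mul0r unitr0.
Qed.

Lemma sf_XN a : X (- a) = (X a)^-1 * v ^ ((a^T *m Lam *m - a) 0 0).
Proof. by rewrite -[X (- a)]mul1r -(mulVr (sf_X_unit a)) -mulrA sf_XM subrr sf_X0 mulr1. Qed.

Lemma sf_XD a b : X (a + b) = (v ^ ((a^T *m Lam *m b) 0 0))^-1 * (X a * X b).
Proof. by rewrite sf_XM mulKr // unitrXz // sf_v_unit. Qed.

Lemma sf_rmorph_eq (G : unitRingType) (f g : {rmorphism F -> G}) :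
  f v = g v -> (forall i, f (X (evec i)) = g (X (evec i))) -> f =1 g.
Proof.
move=> fg_v fg_e.
have fg_vz z : f (v ^ z) = g (v ^ z) by rewrite !rmorphXz ?fg_v ?sf_v_unit.
pose P a := f (X a) = g (X a).
have P_add a b : P a -> P b -> P (a + b).
  by move=> Pa Pb; rewrite /P sf_XD !rmorphM !rmorphV ?unitrXz ?sf_v_unit // fg_vz Pa Pb.
have P_opp a : P a -> P (- a).
  by move=> Pa; rewrite /P sf_XN !rmorphM !rmorphV ?sf_X_unit // fg_vz Pa.
have P_scale i (z : int) : P (z *: evec i).
  have P_nat (N : nat) : P (N%:Z *: evec i).
    elim: N => [|N IH]; first by rewrite scale0r /P sf_X0 !rmorph1.
    by rewrite intS scalerDl scale1r; apply: P_add.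
  by case: z => N; rewrite ?NegzE ?scaleNr; [apply: P_nat | apply/P_opp/P_nat].
have P_all a : P a.
  rewrite [a]matrix_sum_delta; apply: (big_ind P) => [||i _]; rewrite ?big_ord1 //.
    by rewrite /P sf_X0 !rmorph1.
  exact: P_scale.
case: sfF => _ _ _ _ gen x; apply: (gen (fun x => f x = g x)) => //.
- by rewrite !rmorph1.
- by move=> a b fga fgb; rewrite !rmorphB fga fgb.
- by move=> a b fga fgb; rewrite !rmorphM fga fgb.
- move=> a fga; have [ua|nua] := boolP (a \is a GRing.unit); first by rewrite !rmorphV // fga.
  by rewrite invr_out.
Qed.

Lemma leval_central (l : laurent) (x : F) : GRing.comm (leval v l) x.
Proof.
rewrite /GRing.comm /leval mulr_suml mulr_sumr; apply: eq_bigr => i _.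
by rewrite -mulrA sf_comm_vz !mulrA commr_int.
Qed.

Lemma rmorph_leval (G : unitRingType) (f : {rmorphism F -> G}) (l : laurent) :
  f (leval v l) = leval (f v) l.
Proof.
rewrite /leval rmorph_sum; apply: eq_bigr => i _.
by rewrite rmorphM rmorph_int rmorphXz // sf_v_unit.
Qed.

End SkewFieldOfFractions.

Lemma skew_form_diag0 (m : nat) (Lam : 'M[int]_m) (x : 'cV[int]_m) :
  Lam^T = - Lam -> (x^T *m Lam *m x) 0 0 = 0.
Proof.
move=> skew; have : (x^T *m Lam *m x)^T = - (x^T *m Lam *m x).
  by rewrite !trmx_mul trmxK skew mulNmx mulmxN mulmxA.
by move=> /matrixP /(_ 0 0); rewrite !mxE; lia.
Qed.

Section CompatiblePair.
Variables (n p : nat) (delta : 'I_n -> int) (B : 'M[int]_(n + p, n)) (Lam : 'M[int]_(n + p)).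
Variable k : 'I_n.
Hypothesis skew : Lam^T = - Lam.
Hypothesis compat : B^T *m Lam = row_mx (diag_mx (\row_i delta i)) 0.

Lemma mulmx_Lam_col : Lam *m col k B = - delta k *: evec (lshift p k).
Proof.
apply/matrixP => i j; rewrite ord1.
move/matrixP: compat => /(_ k i); rewrite !mxE => compat_ki.
have -> : \sum_l Lam i l * col k B l 0 = - \sum_l B^T k l * Lam l i.
  rewrite -sumrN; apply: eq_bigr => l _.
  by move/matrixP: skew => /(_ l i); rewrite !mxE mulrC => ->; rewrite mulrN.
rewrite compat_ki andbT mulNr mulr_natr; case: splitP => l il; rewrite !mxE.
  have -> : i = lshift p l by apply: val_inj.
  by rewrite (inj_eq (@lshift_inj _ _)) eq_sym.
have /negbTE -> : i != lshift p k by apply/eqP => /(congr1 val) /=; move: (ltn_ord k); lia.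
by rewrite oppr0.
Qed.

Lemma form_scale_col (x : 'cV[int]_(n + p)) (c : int) :
  (x^T *m Lam *m (c *: col k B)) 0 0 = - c * delta k * x (lshift p k) 0.
Proof. by rewrite -scalemxAr -mulmxA mulmx_Lam_col -scalemxAr -colE !mxE; ring. Qed.

Lemma B_kk_eq0 (delta_k_neq0 : delta k != 0) : B (lshift p k) k = 0.
Proof.
have := form_scale_col (col k B) 1; rewrite scale1r skew_form_diag0 // mxE.
by move/esym/eqP; rewrite !mulf_eq0 oppr_eq0 oner_eq0 (negbTE delta_k_neq0) => /eqP.
Qed.

End CompatiblePair.

Section MutationMatrix.
Variables (n p : nat) (B : 'M[int]_(n + p, n)) (r : 'I_n -> nat) (k : 'I_n) (eps : int).

Lemma Emx_evec i : i != lshift p k -> Emx B r k eps *m evec i = evec i.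
Proof.
move=> ne; apply/matrixP => a b; rewrite ord1 -colE !mxE (negbTE ne) andbT.
by rewrite eq_sym.
Qed.

Lemma Emx_evec_kk : (Emx B r k eps *m evec (lshift p k)) (lshift p k) 0 = -1.
Proof. by rewrite -colE !mxE eqxx. Qed.

(* [-eps b r]_+ + s eps b = s [eps b]_+ + (r - s) [-eps b]_+ entrywise, as [x]_+ - [-x]_+ = x. *)
Lemma Emx_evec_addE (s : nat) : (eps == 1) || (eps == -1) -> B (lshift p k) k = 0 ->
  Emx B r k eps *m evec (lshift p k) + (s%:Z * eps) *: col k B =
  s%:Z *: posv (eps *: col k B) + ((r k)%:Z - s%:Z) *: posv (- eps *: col k B)
    - evec (lshift p k).
Proof.
move=> eps_sign B_kk; apply/matrixP => i j; rewrite ord1 -colE !mxE !eqxx /posp /=.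
have [->|_] := eqVneq i (lshift p k); first by rewrite B_kk; lia.
by case/orP: eps_sign => /eqP ->; nia.
Qed.

End MutationMatrix.

Lemma psi_exp_scale_evec (n p : nat) (delta : 'I_n -> int) (k : 'I_n) x (c : int) :
  delta k != 0 -> psi_exp delta k x (c *: evec k) = c * x (lshift p k) 0.
Proof. by move=> dk; rewrite /psi_exp -scalemxAr -colE mul_mx_diag !mxE mulrA mulzK. Qed.

Lemma hpow1 (F : unitRingType) (v : F) h r b z : hpow v h r b z 1 = hfac v h r b z.
Proof. by rewrite /hpow big_ord1 mulr1. Qed.

Lemma hpowN1 (F : unitRingType) (v : F) h r b z : hpow v h r b z (-1) = (hfac v h r (- b) z)^-1.
Proof. by rewrite /hpow /= big_ord1 addr0 (_ : 2 * -1 + 1 = -1) // mulrN1. Qed.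

Section TorusMonomials.
Variables (n p : nat) (delta : 'I_n -> int) (B : 'M[int]_(n + p, n)) (Lam : 'M[int]_(n + p)).
Variable k : 'I_n.
Hypothesis skew : Lam^T = - Lam.
Hypothesis compat : B^T *m Lam = row_mx (diag_mx (\row_i delta i)) 0.
Hypothesis delta_k_neq0 : delta k != 0.
Variables (F : unitRingType) (v : F) (X : 'cV[int]_(n + p) -> F).
Hypothesis sfF : skew_field_of_fractions v Lam X.

Lemma expr_X_scale_col (c : int) (s : nat) : X (c *: col k B) ^+ s = X ((s%:Z * c) *: col k B).
Proof.
elim: s => [|s IH]; first by rewrite mul0r scale0r (sf_X0 sfF).
rewrite exprSr IH (sf_XM sfF) (form_scale_col k skew compat) !mxE (B_kk_eq0 skew compat) //.
by rewrite !mulr0 expr0z mul1r -scalerDl intS mulrDl mul1r addrC.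
Qed.

(* The factor [v ^ (- c * delta k)] compensates the commutation of [X x] past [X (c *: col k B)]. *)
Lemma X_mul_monomial (x : 'cV[int]_(n + p)) (c : int) (s : nat) : x (lshift p k) 0 = -1 ->
  X x * (v ^ (- c * delta k) * X (c *: col k B)) ^+ s = X (x + (s%:Z * c) *: col k B).
Proof.
move=> x_k.
rewrite exprMn_comm; last exact: (sf_comm_vz sfF).
rewrite expr_X_scale_col exprnP exprz_exp mulrA -(sf_comm_vz sfF) -mulrA (sf_XM sfF).
rewrite (form_scale_col k skew compat) x_k mulrA -exprzDr ?(sf_v_unit sfF) //.
by rewrite (_ : _ + _ = 0) ?expr0z ?mul1r //; ring.
Qed.

Lemma X_mul_hfac (x : 'cV[int]_(n + p)) (c : int) (r : nat) (hs : nat -> F) :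
  (forall s y, GRing.comm (hs s) y) -> x (lshift p k) 0 = -1 ->
  X x * hfac v hs r (- c * delta k) (X (c *: col k B)) =
  \sum_(s < r.+1) hs s * X (x + (s%:Z * c) *: col k B).
Proof.
move=> hs_central x_k; rewrite /hfac mulr_sumr; apply: eq_bigr => s _.
by rewrite mulrA -hs_central -mulrA X_mul_monomial.
Qed.

End TorusMonomials.

Section MutationFactorisation.
Variables (n p : nat) (r : 'I_n -> nat) (h : 'I_n -> nat -> laurent) (delta : 'I_n -> int).
Variables (B : 'M[int]_(n + p, n)) (Lam : 'M[int]_(n + p)) (k : 'I_n) (eps : int).
Hypothesis skew : Lam^T = - Lam.
Hypothesis compat : B^T *m Lam = row_mx (diag_mx (\row_i delta i)) 0.
Hypothesis delta_k_neq0 : delta k != 0.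
Hypothesis eps_sign : (eps == 1) || (eps == -1).
Variables (F : unitRingType) (v : F) (X : 'cV[int]_(n + p) -> F).
Hypothesis sfF : skew_field_of_fractions v Lam X.
Variable psi : {rmorphism F -> F}.
Hypothesis psi_v : psi v = v.
Hypothesis psi_X : forall beta, psi (X beta) =
  X beta * (hpow v (fun s => leval v (h k s)) (r k) (delta k) (X (B *m (eps *: evec k)))
                 (psi_exp delta k beta (eps *: evec k)))^-1.

Local Notation hk := (fun s => leval v (h k s)).
Local Notation ek := (evec (lshift p k)).
Local Notation H := (hfac v hk (r k) (- eps * delta k) (X (eps *: col k B))).
Local Notation beta := (Emx B r k eps *m ek).
Local Notation gamma s :=
  (s%:Z *: posv (eps *: col k B) + ((r k)%:Z - s%:Z) *: posv (- eps *: col k B) - ek).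
Local Notation mu_k := (\sum_(s < (r k).+1) hk s * X (gamma s)).

Lemma mutation_sumE : mu_k = X beta * H.
Proof.
rewrite (X_mul_hfac skew compat delta_k_neq0 sfF) ?Emx_evec_kk //; last first.
  by move=> s y; exact: (leval_central sfF (h k s) y).
apply: eq_bigr => s _.
by rewrite Emx_evec_addE // (B_kk_eq0 skew compat delta_k_neq0).
Qed.

Lemma psi_X_evec i : i != lshift p k -> psi (X (evec i)) = X (evec i).
Proof.
move=> ne; rewrite psi_X psi_exp_scale_evec // mxE eq_sym (negbTE ne) mulr0.
by rewrite /hpow big_ord0 invr1 mulr1.
Qed.

Lemma psi_X_kN1 (x : 'cV[int]_(n + p)) : x (lshift p k) 0 = -1 ->
  psi (X x) = if eps == 1 then X x * H else X x / H.
Proof.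
move=> x_k; rewrite psi_X psi_exp_scale_evec // x_k -scalemxAr -colE.
case/orP: eps_sign => /eqP ->.
- by rewrite mul1r hpowN1 invrK mulN1r.
- by rewrite mulN1r opprK hpow1 mul1r.
Qed.

Lemma hfac_unit : H \is a GRing.unit.
Proof.
apply: (sf_unit sfF); apply/eqP => H0.
(* With [H = 0], both [X beta * H] and [X beta / H] vanish, as [0^-1 = 0]. *)
have := rmorph_unit psi (sf_X_unit sfF beta).
by rewrite psi_X_kN1 ?Emx_evec_kk // H0 invr0 !mulr0 if_same unitr0.
Qed.

Lemma psi_X_Emx_evec : eps = 1 -> psi (X beta) = mu_k.
Proof. by move=> eps1; rewrite mutation_sumE psi_X_kN1 ?Emx_evec_kk // eps1. Qed.

Lemma psi_mutation_sum : eps = -1 -> psi mu_k = X beta.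
Proof.
move=> epsN1; have eps_neq1 : (eps == 1) = false by rewrite epsN1.
have B_kk := B_kk_eq0 skew compat delta_k_neq0.
rewrite rmorph_sum (eq_bigr (fun s : 'I_(r k).+1 => hk s * X (gamma s) / H)) => [|s _].
  by rewrite -mulr_suml mutation_sumE mulrK // hfac_unit.
rewrite rmorphM (rmorph_leval sfF) psi_v psi_X_kN1 ?eps_neq1 ?mulrA //.
by rewrite -Emx_evec_addE // mxE Emx_evec_kk !mxE B_kk mulr0 addr0.
Qed.

End MutationFactorisation.
Theorem mainTheorem9
  (n p : nat) (r : 'I_n -> nat) (h : 'I_n -> nat -> laurent)
  (delta : 'I_n -> int)
  (B : 'M[int]_(n + p, n)) (Lam Lam' : 'M[int]_(n + p))
  (F F' : unitRingType) (v : F) (v' : F')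
  (X : 'cV[int]_(n + p) -> F) (X' : 'cV[int]_(n + p) -> F')
  (k : 'I_n) (eps : int)
  (mu phi : {rmorphism F' -> F}) (psi psii : {rmorphism F -> F}) :
  (* mutation data (R, h) *)
  (forall i, (0 < r i)%N) ->
  (forall i s, (s <= r i)%N -> leqv (h i s) (h i (r i - s)%N)) ->
  (forall i, leqv (h i 0%N) lone /\ leqv (h i (r i)) lone) ->
  (* compatible pair (B_t, Lam_t), D = diag(delta) = diag(d_1^-1, ..., d_n^-1) *)
  (forall i, 0 < delta i) ->
  Lam^T = - Lam ->
  B^T *m Lam = row_mx (diag_mx (\row_i delta i)) 0 ->
  (* Lam_t' is the mutation of Lam_t in direction k *)
  Lam' = (Emx B r k 1)^T *m Lam *m Emx B r k 1 ->
  (* F_t and F_t' *)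
  skew_field_of_fractions v Lam X ->
  skew_field_of_fractions v' Lam' X' ->
  (eps == 1) || (eps == -1) ->
  (* mu_{k;t} *)
  mu v' = v ->
  (forall i, i != lshift p k -> mu (X' (evec i)) = X (evec i)) ->
  mu (X' (evec (lshift p k))) =
    \sum_(s < (r k).+1)
      leval v (h k s) *
      X (s%:Z *: posv (eps *: col k B) + ((r k)%:Z - s%:Z) *: posv (- eps *: col k B)
         - evec (lshift p k)) ->
  (* phi_{k;t;eps} *)
  phi v' = v ->
  (forall a, phi (X' a) = X (Emx B r k eps *m a)) ->
  (* psi = psi_{k;t}(Yhat_{k;t}^eps), psii its inverse *)
  psi v = v ->
  (forall beta, psi (X beta) =
     X beta * (hpow v (fun s => leval v (h k s)) (r k) (delta k)
                    (X (B *m (eps *: evec k)))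
                    (psi_exp delta k beta (eps *: evec k)))^-1) ->
  (forall x, psi (psii x) = x /\ psii (psi x) = x) ->
  forall x : F', mu x = (if eps == 1 then psi (phi x) else psii (phi x)).
Proof.
move=> _ _ _ delta_pos skew compat _ sfF sfF' eps_sign mu_v mu_X mu_Xk phi_v phi_X
  psi_v psi_X psiK.
have delta_k_neq0 : delta k != 0 by rewrite gt_eqF.
have psi_Xe := psi_X_evec delta_k_neq0 psi_X.
have psiiK x : psii (psi x) = x by case: (psiK x).
have [eps1|eps_neq1] := eqVneq eps 1.
- apply: (sf_rmorph_eq sfF' (g := (psi \o phi)%FUN)) => [|i] /=; first by rewrite phi_v psi_v.
  have [->|ne] := eqVneq i (lshift p k); last by rewrite mu_X // phi_X Emx_evec // psi_Xe.
  by rewrite mu_Xk phi_X (psi_X_Emx_evec skew compat delta_k_neq0 eps_sign sfF psi_X).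
- have epsN1 : eps = -1 by move: eps_sign; rewrite (negbTE eps_neq1) => /eqP.
  apply: (sf_rmorph_eq sfF' (g := (psii \o phi)%FUN)) => [|i] /=.
    by rewrite phi_v -psi_v psiiK mu_v.
  have [->|ne] := eqVneq i (lshift p k); last first.
    by rewrite mu_X // phi_X Emx_evec // -[in RHS](psi_Xe _ ne) psiiK.
  by rewrite mu_Xk phi_X -(psi_mutation_sum skew compat delta_k_neq0 eps_sign sfF psi_v psi_X).
Qed.
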